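(* Let $K$ be a global function field, $\ell$ a rational prime coprime to the characteristic of $K$, and suppose a primitive $\ell$-th root of unity $\zeta_\ell$ lies in $K$. Let $x,d,a\in K^*$ with $dx^\ell+d^\ell\neq0$ and $a+a^{-1}\neq0$, and let $H=K\left(\sqrt[\ell]{1+d^{-1}},\sqrt[\ell]{1+(dx^\ell+d^\ell)^{-1}},\sqrt[\ell]{1+(a+a^{-1})d^{-1}}\right)$. Let $\mathfrak{p}$ be a prime of $K$ such that (i) $v_\mathfrak{p}(d)<0$; (ii) $v_\mathfrak{p}(dx^\ell)<v_\mathfrak{p}(d^\ell)$; (iii) $v_\mathfrak{p}(a)=0$ and the residue of $a$ at $\mathfrak{p}$ is not an $\ell$-th power in $\mathbb{F}_\mathfrak{p}^\times$; (iv) $v_\mathfrak{p}(d)\not\equiv0\pmod\ell$. Then for every prime $\mathfrak{q}$ of $H$ above $\mathfrak{p}$ we have $v_\mathfrak{q}(dx^\ell+d^\ell)\not\equiv0\pmod\ell$ and the residue of $a$ at $\mathfrak{q}$ is not an $\ell$-th power in $\mathbb{F}_\mathfrak{q}^\times$.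
   Context: For a prime $\mathfrak{p}$ of a global function field, $v_\mathfrak{p}$ denotes the normalized discrete valuation and $\mathbb{F}_\mathfrak{p}$ the residue field. *)

From HB Require Import structures.
From mathcomp Require Import all_boot all_order all_algebra all_field.
From mathcomp Require Import fraction.
Set Implicit Arguments. Unset Strict Implicit. Unset Printing Implicit Defensive.
Import Order.TTheory GRing.Theory Num.Theory.
Local Open Scope ring_scope.

(* The rational function field F(t) over a finite field F. A global function
   field is a finite extension K : fieldExtType (ratfun F). *)
Definition ratfun (F : finFieldType) := {fraction {poly F}}.

(* v is a normalized discrete valuation of K (a prime of K): on K^*,
   v(xy) = v x + v y, v(x+y) >= min (v x) (v y), and v is onto Z (it takes
   the value 1).  The value of v at 0 is irrelevant and never used. *)
Definition is_prime_val (K : fieldType) (v : K -> int) : Prop :=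
  [/\ (forall x y : K, x != 0 -> y != 0 -> v (x * y) = v x + v y),
      (forall x y : K, x != 0 -> y != 0 -> x + y != 0 ->
          (v x <= v (x + y)) || (v y <= v (x + y)))
    & (exists x : K, x != 0 /\ v x = 1)].

(* The residue of a (a unit at v) is an l-th power in the multiplicative
   group of the residue field: there is a unit y with y^l = a mod the
   maximal ideal. *)
Definition residue_lth_power (K : fieldType) (v : K -> int) (l : nat) (a : K)
  : Prop :=
  exists y : K, [/\ y != 0, v y = 0 & (a - y ^+ l == 0) || (0 < v (a - y ^+ l))].

(* The prime w of the extension L/K lies above the prime v of K:
   w restricted to K is e * v for some ramification index e >= 1. *)
Definition lies_above (K : fieldType) (L : fieldExtType K)
  (w : L -> int) (v : K -> int) : Prop :=
  exists e : nat, (0 < e)%N /\ forall x : K, x != 0 -> w (x%:A) = (e%:Z) * v x.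

From HB Require Import structures.
From mathcomp Require Import all_boot all_order all_algebra all_field.
From mathcomp Require Import fraction zify ring.
Import Order.TTheory GRing.Theory Num.Theory.
Local Open Scope ring_scope.
Set Implicit Arguments. Unset Strict Implicit. Unset Printing Implicit Defensive.

(* Since v_p(d) < 0, each of the three radicands is a 1-unit u at p.  By
   Hensel's lemma u = c^l (1 + s) with c in K and s as p-adically small as we
   like, and then, because the l-th roots of unity lie in K and are
   separated, every l-th root of u in H is q-adically close to some c zeta^i.
   So K is dense in H for the q-adic topology: q has ramification index 1
   over p, and every q-unit is congruent mod q to an element of K.  Hence
   v_q(d x^l + d^l) = v_p(d x^l) = v_p(d) + l v_p(x), which is not divisible
   by l, and an l-th power residue of a at q would already be one at p. *)

(* x lies in the N-th power of the ideal of v; the case x = 0 is separate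
   because [v 0] is a junk value. *)
Definition val_ge (L : fieldType) (v : L -> int) (x : L) (N : int) : bool :=
  (x == 0) || (N <= v x).

Section PrimeValuation.
Variables (L : fieldType) (v : L -> int).
Hypothesis hv : is_prime_val v.
Implicit Types (x y : L) (M N : int).

Lemma pvM x y : x != 0 -> y != 0 -> v (x * y) = v x + v y.
Proof. by case: hv => vM _ _; apply: vM. Qed.

Lemma pv1 : v 1 = 0.
Proof.
have := pvM (oner_neq0 L) (oner_neq0 L); rewrite mulr1 => h.
by apply: (addrI (v 1)); rewrite addr0 -h.
Qed.

Lemma pvX x n : x != 0 -> v (x ^+ n) = n%:Z * v x.
Proof.
move=> x0; elim: n => [|n IHn]; first by rewrite expr0 pv1 mul0r.
by rewrite exprS pvM ?expf_neq0 // IHn intS mulrDl mul1r.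
Qed.

Lemma pvX_eq0 x n : (0 < n)%N -> x != 0 -> v (x ^+ n) = 0 -> v x = 0.
Proof. by move=> n_gt0 x0; rewrite pvX // => ?; nia. Qed.

Lemma pvN x : v (- x) = v x.
Proof.
have [->|x0] := eqVneq x 0; first by rewrite oppr0.
have N1_0 : (-1 : L) != 0 by rewrite oppr_eq0 oner_neq0.
have vN1 : v (-1) = 0 by apply: (@pvX_eq0 _ 2) => //; rewrite sqrrN expr1n pv1.
by rewrite -mulN1r pvM // vN1 add0r.
Qed.

Lemma pvV x : x != 0 -> v x^-1 = - v x.
Proof. by move=> x0; have := pvM x0 (invr_neq0 x0); rewrite mulfV // pv1 => ?; lia. Qed.

Lemma val_geE x N : x != 0 -> val_ge v x N = (N <= v x).
Proof. by rewrite /val_ge => /negPf ->. Qed.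

Lemma val_geP x N : N <= v x -> val_ge v x N.
Proof. by rewrite /val_ge => ->; rewrite orbT. Qed.

Lemma val_ge0 N : val_ge v 0 N.
Proof. by rewrite /val_ge eqxx. Qed.

Lemma val_ge_self x : val_ge v x (v x).
Proof. exact: val_geP. Qed.

Lemma val_geW x M N : M <= N -> val_ge v x N -> val_ge v x M.
Proof. by rewrite /val_ge => MN /orP [->//|/(le_trans MN) ->]; rewrite orbT. Qed.

Lemma val_geD x y N : val_ge v x N -> val_ge v y N -> val_ge v (x + y) N.
Proof.
have [->|x0] := eqVneq x 0; first by rewrite add0r.
have [->|y0] := eqVneq y 0; first by rewrite addr0.
have [->|xy0] := eqVneq (x + y) 0; first by rewrite val_ge0.
rewrite !val_geE //; case: hv => _ vD _ Nx Ny.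
by case/orP: (vD x y x0 y0 xy0) => /(le_trans _) ->.
Qed.

Lemma val_geN x N : val_ge v (- x) N = val_ge v x N.
Proof. by rewrite /val_ge oppr_eq0 pvN. Qed.

Lemma val_geB x y N : val_ge v x N -> val_ge v y N -> val_ge v (x - y) N.
Proof. by move=> vx vy; rewrite val_geD // val_geN. Qed.

Lemma val_geM x y M N : val_ge v x M -> val_ge v y N -> val_ge v (x * y) (M + N).
Proof.
have [->|x0] := eqVneq x 0; first by rewrite mul0r => _ _; apply: val_ge0.
have [->|y0] := eqVneq y 0; first by rewrite mulr0 => _ _; apply: val_ge0.
by rewrite !val_geE ?mulf_neq0 // pvM //; apply: lerD.
Qed.

Lemma val_ge1 : val_ge v 1 0.
Proof. by apply: val_geP; rewrite pv1. Qed.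

Lemma val_geX x n : val_ge v x 0 -> val_ge v (x ^+ n) 0.
Proof.
move=> vx; elim: n => [|n IHn]; first by rewrite expr0 val_ge1.
by rewrite exprS -[0]addr0 val_geM.
Qed.

Lemma val_ge_sum (I : Type) (r : seq I) (P : pred I) (F : I -> L) N :
  (forall i, P i -> val_ge v (F i) N) -> val_ge v (\sum_(i <- r | P i) F i) N.
Proof.
move=> vF; elim/big_rec: _ => [|i x Pi vx]; first exact: val_ge0.
exact: val_geD (vF i Pi) vx.
Qed.

Lemma val_ge_natr n : val_ge v n%:R 0.
Proof.
elim: n => [|n IHn]; first exact: val_ge0.
by rewrite mulrS val_geD // val_ge1.
Qed.

Lemma val_geV x : v x = 0 -> val_ge v x^-1 0.
Proof.
have [->|x0] := eqVneq x 0; first by rewrite invr0 val_ge0.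
by move=> vx; apply: val_geP; rewrite pvV // vx.
Qed.

Lemma val_geV_lt0 x : v x < 0 -> val_ge v x^-1 1.
Proof.
have [->|x0] := eqVneq x 0; first by rewrite invr0 val_ge0.
by rewrite val_geE ?invr_neq0 // pvV // => ?; lia.
Qed.

Lemma pvD_eq x y : x != 0 -> val_ge v y (v x + 1) -> x + y != 0 /\ v (x + y) = v x.
Proof.
move=> x0 vy; have xy0 : x + y != 0.
  apply: contraTneq vy => /(canRL (addKr x)) ->.
  by rewrite addr0 val_geN val_geE //; lia.
have vy' : val_ge v y (v x) by apply: val_geW vy; lia.
have := val_geD (val_ge_self x) vy'; rewrite val_geE // => ge_xy.
split => //; apply/eqP; rewrite eq_le ge_xy andbT leNgt; apply/negP => lt_x_xy.
have : val_ge v (x + y - y) (v x + 1) by rewrite val_geB // val_geE //; lia.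
by rewrite addrK val_geE //; lia.
Qed.

Lemma pv_prod (I : finType) (F : I -> L) :
  (forall i, F i != 0) -> v (\prod_i F i) = \sum_i v (F i).
Proof.
move=> F0; suff [] : \prod_i F i != 0 /\ v (\prod_i F i) = \sum_i v (F i) by [].
apply: (big_rec2 (fun x s => x != 0 /\ v x = s)); first by rewrite oner_neq0 pv1.
by move=> i x s _ [x0 <-]; rewrite mulf_neq0 ?F0 ?pvM ?F0.
Qed.

Lemma pv_separation (I : finType) (r : I -> L) : injective r ->
  exists2 B, 0 <= B & forall i j, i != j -> ~~ val_ge v (r i - r j) (B + 1).
Proof.
move=> r_inj; pose D i j := `|v (r i - r j)|.
have sum_ge (J : finType) (F : J -> int) j :
    (forall k, 0 <= F k) -> F j <= \sum_k F k.
  by move=> F_ge0; rewrite (bigD1 j) //= lerDl sumr_ge0.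
exists (\sum_i \sum_j D i j) => [|i j ij]; first by do 2!apply: sumr_ge0 => ? _.
have rij : r i - r j != 0 by rewrite subr_eq0 (inj_eq r_inj).
rewrite val_geE // -ltNge ltzD1 (le_trans (ler_norm _)) //.
apply: le_trans (sum_ge _ _ i _) => [|k]; last exact: sumr_ge0.
exact: sum_ge.
Qed.

(* Two factors of valuation > B would give v (r i - r j) > B, so one factor
   carries all but at most #|I| * B of the valuation of the product. *)
Lemma close_to_some_root (I : finType) (r : I -> L) z B N :
  0 <= B -> 0 < N -> (forall i j, i != j -> ~~ val_ge v (r i - r j) (B + 1)) ->
  (forall i, val_ge v (z - r i) 0) ->
  val_ge v (\prod_i (z - r i)) (N + #|I|%:Z * B) ->
  exists i, val_ge v (z - r i) N.
Proof.
move=> B_ge0 N_gt0 r_sep f_ge0; pose f i := z - r i.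
change (val_ge v (\prod_i f i) (N + #|I|%:Z * B) -> exists i, val_ge v (f i) N).
have [/existsP [i /eqP fi0] | /existsPn f_neq0] := boolP [exists i, f i == 0].
  by exists i; rewrite fi0 val_ge0.
have {}f_ge0 i : 0 <= v (f i) by rewrite -(val_geE _ (f_neq0 i)); apply: f_ge0.
have prod_neq0 : \prod_i f i != 0 by apply/prodf_neq0 => i _.
rewrite val_geE // pv_prod //.
have sumB : \sum_(j : I) B = #|I|%:Z * B by rewrite sumr_const -mulr_natl natz.
have [/existsP [i0 big_i0] | /existsPn all_small] := boolP [exists i, B < v (f i)];
    last first.
  have : \sum_i v (f i) <= #|I|%:Z * B.
    by rewrite -sumB ler_sum // => i _; rewrite leNgt all_small.
  by move=> ? ?; nia.
have small j : j != i0 -> v (f j) <= B.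
  move=> ji0; rewrite leNgt; apply: contraNN (r_sep _ _ ji0) => big_j.
  have -> : r j - r i0 = f i0 - f j by rewrite /f; ring.
  by rewrite val_geB // val_geE //; lia.
move=> sum_ge; exists i0; rewrite val_geE //.
move: sum_ge; rewrite (bigD1 i0) //=; set rest := (X in _ <= _ + X) => sum_ge.
suff : rest <= #|I|%:Z * B by move: sum_ge; set X := #|I|%:Z * B => ? ?; lia.
rewrite -sumB [X in _ <= X](bigD1 i0) //= -[X in X <= _]add0r.
by apply: lerD => //; apply: ler_sum => j; apply: small.
Qed.

End PrimeValuation.

Section Hensel.
Variables (K : fieldType) (v : K -> int) (l : nat).
Hypotheses (hv : is_prime_val v) (l_neq0 : (l%:R : K) != 0) (vl : v l%:R = 0).

Lemma expr1Dn_taylor t n : val_ge v t 0 ->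
  exists r, val_ge v r 0 /\ (1 + t) ^+ n = 1 + n%:R * t + t ^+ 2 * r.
Proof.
move=> vt; elim: n => [|n [r [vr er]]].
  by exists 0; rewrite val_ge0 expr0 mul0r mulr0 !addr0.
exists (n%:R + r + t * r); split; last by rewrite exprS er mulrSr; ring.
by rewrite !val_geD ?val_ge_natr // -[0]addr0 val_geM.
Qed.

(* Multiplying c by 1 + s/l removes the first-order part of the error s, so
   each step doubles the precision (we only need it to grow by one). *)
Lemma hensel_lth_power u : val_ge v (u - 1) 1 -> forall n : nat,
  exists c s, [/\ c != 0, v c = 0, u = c ^+ l * (1 + s) & val_ge v s (n%:Z + 1)].
Proof.
move=> vu; elim=> [|n [c [s [c0 vc -> vs]]]].
  by exists 1, (u - 1); rewrite oner_neq0 pv1 // expr1n mul1r addrC subrK.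
have [s0|s0] := eqVneq s 0; first by exists c, s; rewrite s0 val_ge0.
have vs_ge : n%:Z + 1 <= v s by rewrite -(val_geE _ _ s0).
set t := s / l%:R.
have t0 : t != 0 by rewrite mulf_neq0 ?invr_eq0.
have vt : v t = v s by rewrite pvM ?invr_eq0 // pvV // vl oppr0 addr0.
have [r [vr er]] : exists r, val_ge v r 0 /\ (1 + t) ^+ l = 1 + l%:R * t + t ^+ 2 * r.
  by apply: expr1Dn_taylor; apply: val_geP; rewrite vt; lia.
have [t10 vt1] : 1 + t != 0 /\ v (1 + t) = 0.
  rewrite -[X in v _ = X](pv1 hv); apply: (pvD_eq hv (oner_neq0 K)).
  by apply: val_geP; rewrite pv1 // vt; lia.
have tl0 : (1 + t) ^+ l != 0 by rewrite expf_neq0.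
have vtl : v ((1 + t) ^+ l) = 0 by rewrite pvX // vt1 mulr0.
exists (c * (1 + t)), (- (t ^+ 2 * r) / (1 + t) ^+ l); split.
- by rewrite mulf_neq0.
- by rewrite pvM // vc vt1 addr0.
- have -> : s = l%:R * t by rewrite mulrC divfK.
  rewrite exprMn -mulrA er; congr (_ * _); field; by rewrite -er.
- have vt' : val_ge v t (v s) by apply: val_geP; rewrite vt.
  have : val_ge v (- (t ^+ 2 * r) / (1 + t) ^+ l) (v s + v s + 0 + 0).
    apply: (val_geM hv); last exact: (val_geV hv).
    by rewrite (val_geN hv) expr2 -mulrA -addrA !(val_geM hv).
  by move=> vq; apply: val_geW vq; lia.
Qed.

End Hensel.

Lemma prod_sub_prim_root (F : fieldType) n (xi z : F) : n.-primitive_root xi ->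
  \prod_(i < n) (z - xi ^+ i) = z ^+ n - 1.
Proof.
move=> xi_prim; have := congr1 (horner^~ z) (factor_Xn_sub_1 xi_prim).
rewrite horner_prod big_mkord hornerD hornerN hornerXn hornerC => <-.
by apply: eq_bigr => i _; rewrite hornerXsubC.
Qed.

(* h is adherent to K for the w-adic topology, i.e. lies in the closure of K
   in the completion of H at w. *)
Definition adherent (K : fieldType) (H : fieldExtType K) (w : H -> int) (h : H) :=
  forall N : int, exists c : K, val_ge w (h - c%:A) N.

Section Adherence.
Variables (K : fieldType) (H : fieldExtType K) (w : H -> int).
Hypothesis hw : is_prime_val w.
Implicit Types (c : K) (h : H).

Lemma adherent_alg c : adherent w c%:A.
Proof. by move=> N; exists c; rewrite subrr val_ge0. Qed.

Lemma adherentD h1 h2 : adherent w h1 -> adherent w h2 -> adherent w (h1 + h2).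
Proof.
move=> adh1 adh2 N; have [c1 h1c1] := adh1 N; have [c2 h2c2] := adh2 N.
exists (c1 + c2); rewrite scalerDl opprD addrACA.
exact: (val_geD hw).
Qed.

Lemma adherentM h1 h2 : adherent w h1 -> adherent w h2 -> adherent w (h1 * h2).
Proof.
move=> adh1 adh2 N; set m1 := - `|w h1|; set m2 := - `|w h2|.
have h_ge h : val_ge w h (- `|w h|) by apply: val_geW (val_ge_self w h); lia.
have [c2 h2c2] := adh2 (`|N| + `|m1| + `|m2|).
have c2_ge : val_ge w c2%:A m2.
  rewrite -[c2%:A](subKr h2) (val_geB hw) //; apply: val_geW h2c2; lia.
have [c1 h1c1] := adh1 (N - m2).
exists (c1 * c2).
have -> : h1 * h2 - (c1 * c2)%:A = h1 * (h2 - c2%:A) + (h1 - c1%:A) * c2%:A.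
  by rewrite -!in_algE rmorphM; ring.
apply: (val_geD hw); first by apply: val_geW (val_geM hw (h_ge h1) h2c2); lia.
by apply: val_geW (val_geM hw h1c1 c2_ge); lia.
Qed.

Lemma adherent_sum (I : Type) (r : seq I) (P : pred I) (F : I -> H) :
  (forall i, P i -> adherent w (F i)) -> adherent w (\sum_(i <- r | P i) F i).
Proof.
move=> adhF; elim/big_rec: _ => [|i h Pi adh_h].
  by rewrite -(scale0r 1); apply: adherent_alg.
exact: adherentD (adhF i Pi) adh_h.
Qed.

Lemma adherentX h n : adherent w h -> adherent w (h ^+ n).
Proof.
move=> adh; elim: n => [|n IHn].
  by rewrite expr0 -(scale1r 1); apply: adherent_alg.
by rewrite exprS; apply: adherentM.
Qed.

Lemma adherent_adjoin (U : {subfield H}) x : {in U, forall u, adherent w u} ->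
  adherent w x -> {in <<U; x>>%VS, forall h, adherent w h}.
Proof.
move=> adhU adhx h /Fadjoin_poly_eq <-; rewrite horner_coef.
apply: adherent_sum => i _; apply: adherentM; last exact: adherentX.
exact/adhU/(polyOverP (Fadjoin_polyOver U x h)).
Qed.

Lemma adherent_adjoin_seq (V : {vspace H}) rs : {in agenv V, forall u, adherent w u} ->
  {in rs, forall x, adherent w x} -> {in <<V & rs>>%VS, forall h, adherent w h}.
Proof.
elim: rs V => [|x rs IHrs] V adhV adhrs; first by rewrite adjoin_nil.
rewrite adjoin_cons; apply: IHrs => [|y rs_y]; last by apply: adhrs; rewrite inE rs_y orbT.
rewrite agenv_id -agenv_add_id; apply: (adherent_adjoin (U := agenv_aspace V)) => //.
by apply: adhrs; rewrite inE eqxx.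
Qed.

End Adherence.

Section LiesAbove.
Variables (K : fieldType) (H : fieldExtType K) (v : K -> int) (w : H -> int) (e : nat).
Hypotheses (hv : is_prime_val v) (hw : is_prime_val w) (e_gt0 : (0 < e)%N).
Hypothesis wE : forall c : K, c != 0 -> w c%:A = e%:Z * v c.
Implicit Types (c : K) (h : H).

Lemma alg_eq0 c : (c%:A == 0 :> H) = (c == 0).
Proof. by rewrite scaler_eq0 oner_eq0 orbF. Qed.

Lemma val_ge_alg c N : 0 <= N -> val_ge v c N -> val_ge w c%:A N.
Proof.
have [->|c0] := eqVneq c 0; first by rewrite scale0r => _ _; apply: val_ge0.
by rewrite !val_geE ?alg_eq0 // wE // => ? ?; nia.
Qed.

Lemma adherent_lth_root l (zeta : K) y u : (l%:R : K) != 0 -> v l%:R = 0 ->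
  l.-primitive_root zeta -> y ^+ l = u%:A -> val_ge v (u - 1) 1 -> adherent w y.
Proof.
move=> l0 vl zeta_prim yu vu N; have l_gt0 := prim_order_gt0 zeta_prim.
pose xi : H := zeta%:A.
have xi_prim : l.-primitive_root xi by rewrite /xi -in_algE fmorph_primitive_root.
have xi_inj : injective (fun i : 'I_l => xi ^+ i).
  move=> i j /eqP; rewrite (eq_prim_root_expr xi_prim) !modn_small //.
  by move/eqP/val_inj.
have [B B_ge0 xi_sep] := pv_separation w xi_inj.
have wxi i : val_ge w (xi ^+ i) 0.
  have xi_i0 : xi ^+ i != 0 by rewrite expf_neq0 // (prim_root_eq0 xi_prim) -lt0n.
  apply: val_geP; rewrite (pvX_eq0 hw l_gt0 xi_i0) //.
  by rewrite exprAC (prim_expr_order xi_prim) expr1n pv1.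
pose M := `|N| + 1.
have [c [s [c0 vc us vs]]] := hensel_lth_power hv l0 vl vu (absz (M + l%:Z * B)).
have cA0 : c%:A != 0 :> H by rewrite alg_eq0.
pose z := y / c%:A.
have zs : z ^+ l = (1 + s)%:A.
  by rewrite /z exprMn exprVn yu us -!in_algE rmorphM rmorphXn; field; rewrite expf_neq0.
have [s1_0 vs1] : 1 + s != 0 /\ v (1 + s) = v 1.
  by apply: (pvD_eq hv (oner_neq0 K)); apply: val_geW vs; rewrite pv1 //; lia.
have z0 : z != 0.
  by apply: contra_neq s1_0 => z0; apply/eqP; rewrite -alg_eq0 -zs z0 expr0n gtn_eqF.
have wz : val_ge w z 0.
  apply: val_geP; rewrite (pvX_eq0 hw l_gt0 z0) //.
  by rewrite zs wE // vs1 pv1 // mulr0.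
have [i zi] : exists i : 'I_l, val_ge w (z - xi ^+ i) M.
  apply: (close_to_some_root hw B_ge0 _ xi_sep) => [|i|]; first by lia.
    exact: (val_geB hw).
  have -> : \prod_(i < l) (z - xi ^+ i) = s%:A.
    by rewrite prod_sub_prim_root // zs scalerDl scale1r addrAC subrr add0r.
  rewrite card_ord.
  by apply: val_ge_alg; [lia | apply: val_geW vs; lia].
exists (c * zeta ^+ i).
have -> : y - (c * zeta ^+ i)%:A = c%:A * (z - xi ^+ i).
  by rewrite /z /xi -!in_algE rmorphM rmorphXn; field.
apply: val_geW (val_geM hw (_ : val_ge w c%:A 0) zi); first by lia.
by apply: val_ge_alg; rewrite // val_geE // vc.
Qed.

Lemma ramification_index1 : (forall h, adherent w h) -> e = 1%N.
Proof.
move=> adh; have [_ _ [t [t0 wt]]] := hw.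
have [c tc] := adh t 2.
have tc' : val_ge w (c%:A - t) (w t + 1) by rewrite wt -(val_geN hw) opprB.
have [] := pvD_eq hw t0 tc'; rewrite subrKC wt.
rewrite alg_eq0 => c0; rewrite wE // => /(congr1 absz).
by rewrite abszM absz_nat => /eqP; rewrite muln_eq1 => /andP [/eqP].
Qed.

Lemma residue_lth_power_descent l a : (forall h, adherent w h) ->
  residue_lth_power w l a%:A -> residue_lth_power v l a.
Proof.
move=> adh [y [y0 wy ay]]; have [c yc] := adh y 1.
have yc' : val_ge w (c%:A - y) (w y + 1) by rewrite wy -(val_geN hw) opprB.
have [] := pvD_eq hw y0 yc'; rewrite subrKC wy => cA0 wc.
have c0 : c != 0 by rewrite -alg_eq0.
have vc : v c = 0 by move: wc; rewrite wE // => ?; nia.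
exists c; split => //.
have ay' : val_ge w (a%:A - y ^+ l) 1.
  by case/orP: ay => [/eqP ->|pos]; [exact: val_ge0 | apply: val_geP; rewrite -gtz0_ge1].
have yc_l : val_ge w (y ^+ l - c%:A ^+ l) 1.
  have wc0 : val_ge w c%:A 0 by rewrite val_geE // wc.
  have wy0 : val_ge w y 0 by rewrite val_geE // wy.
  rewrite subrXX -[X in val_ge _ _ X]addr0; apply: (val_geM hw yc).
  apply: (val_ge_sum hw) => i _; rewrite -[0]addr0.
  by apply: (val_geM hw); apply: (val_geX hw).
have := val_geD hw ay' yc_l; rewrite addrA subrK.
have -> : a%:A - c%:A ^+ l = (a - c ^+ l)%:A :> H by rewrite -!in_algE rmorphB rmorphXn.
have [->//|ac0] := eqVneq (a - c ^+ l) 0.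
by rewrite /= val_geE ?alg_eq0 // wE //; set X := v _ => ?; nia.
Qed.

End LiesAbove.

Lemma pv_natr (F : finFieldType) (K : fieldExtType (ratfun F)) (v : K -> int) n :
  is_prime_val v -> (n%:R : K) != 0 -> v n%:R = 0.
Proof.
move=> hv n0.
have pv_const (c : F) : c != 0 -> v (tofrac c%:P)%:A = 0.
  move=> c0; pose x : K := (tofrac c%:P)%:A.
  have x0 : x != 0 by rewrite alg_eq0 tofrac_eq0 polyC_eq0.
  have xF : x ^+ #|F| = x by rewrite /x -in_algE -!rmorphXn expf_card.
  have := pvX hv #|F| x0; rewrite xF => /eqP.
  rewrite -subr_eq0 -{1}[v x]mul1r -mulrBl mulf_eq0 subr_eq0 eqz_nat.
  by have := finNzRing_gt1 F; case: ltngtP => // _ _ /eqP.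
have nK : (n%:R : K) = (tofrac (n%:R : F)%:P)%:A by rewrite -in_algE !rmorph_nat.
rewrite nK pv_const //; apply: contra_neq n0 => nF0.
by rewrite nK nF0 polyC0 tofrac0 scale0r.
Qed.

Unset Implicit Arguments.
Theorem lemma3p6 (F : finFieldType) (K : fieldExtType (ratfun F)) (l : nat)
  (hl : prime l) (hchar : l \notin [pchar K])
  (hzeta : exists z : K, l.-primitive_root z)
  (x d a : K) (hx : x != 0) (hd : d != 0) (ha : a != 0)
  (hdx : d * x ^+ l + d ^+ l != 0) (haa : a + a^-1 != 0)
  (H : fieldExtType K) (al be ga : H)
  (hal : al ^+ l = (1 + d^-1)%:A)
  (hbe : be ^+ l = (1 + (d * x ^+ l + d ^+ l)^-1)%:A)
  (hga : ga ^+ l = (1 + (a + a^-1) * d^-1)%:A)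
  (hgen : (<<1%VS & [:: al; be; ga]>>%VS = fullv))
  (vp : K -> int) (hvp : is_prime_val vp)
  (h1 : vp d < 0)
  (h2 : vp (d * x ^+ l) < vp (d ^+ l))
  (h3a : vp a = 0) (h3b : ~ residue_lth_power vp l a)
  (h4 : ~~ ((l%:Z) %| vp d)%Z) :
  forall wq : H -> int, is_prime_val wq -> lies_above wq vp ->
    ~~ ((l%:Z) %| wq ((d * x ^+ l + d ^+ l)%:A))%Z /\
    ~ residue_lth_power wq l (a%:A).
Proof.
move=> wq hwq [e [e_gt0 wqE]]; have [zeta zeta_prim] := hzeta.
have l0 : (l%:R : K) != 0 by move: hchar; rewrite inE hl.
have root_adh := adherent_lth_root hvp hwq e_gt0 wqE l0 (pv_natr hvp l0) zeta_prim.
have dxl0 : d * x ^+ l != 0 by rewrite mulf_neq0 ?expf_neq0.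
have dl_small : val_ge vp (d ^+ l) (vp (d * x ^+ l) + 1) by apply: val_geP; lia.
have [_ vD] := pvD_eq hvp dxl0 dl_small.
have vD_lt0 : vp (d * x ^+ l + d ^+ l) < 0.
  by move: h2; rewrite vD !pvM ?expf_neq0 // !pvX //; nia.
have adh_gen : {in [:: al; be; ga], forall y, adherent wq y}.
  move=> y; rewrite !inE => /or3P [] /eqP ->; apply: root_adh;
    rewrite ?hal ?hbe ?hga // addrC addKr.
  - exact: val_geV_lt0.
  - exact: val_geV_lt0.
  rewrite -[1]add0r; apply: (val_geM hvp); last exact: val_geV_lt0.
  by rewrite (val_geD hvp) ?val_geV // val_geP // h3a.
have dense h : adherent wq h.
  apply: (adherent_adjoin_seq hwq (V := 1%VS)) adh_gen _ _; last by rewrite hgen memvf.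
  move=> u /(subvP (agenv_sub_modl (subvv 1) _)); rewrite prodv1 subvv => /(_ isT).
  by case/vlineP=> k ->; apply: adherent_alg.
have e1 := ramification_index1 hwq wqE dense; subst e.
split; last by move/(residue_lth_power_descent hwq e_gt0 wqE dense).
rewrite wqE // mul1r vD pvM ?expf_neq0 // pvX //.
by rewrite rpredDr ?dvdz_mulr.
Qed.
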